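(* Let $\epsilon>0$, $\delta\ge0$, $n\ge1$, $\theta_0\in(0,1)$, set $b=e^{-\epsilon}$ and $q=\frac{2\delta b}{1-b+2\delta b}$, let $X\sim\mathrm{Binom}(n,\theta)$ with $\theta$ unknown, and let $Z\mid X\sim\mathrm{Tulap}(X,b,q)$. Define $p(\theta_0,Z):=P(X'+N\ge Z\mid Z)$, where the probability is over independent $X'\sim\mathrm{Binom}(n,\theta_0)$ and $N\sim\mathrm{Tulap}(0,b,q)$ (independent of $Z$). Then: (1) $p(\theta_0,Z)$ is a $p$-value for $H_0:\theta\le\theta_0$ versus $H_1:\theta>\theta_0$; (2) for every $0<\alpha<1$, the test $\phi^*_x=P_{Z\mid X\sim\mathrm{Tulap}(X,b,q)}\big(p(\theta_0,Z)\le\alpha\mid X=x\big)$ is the uniformly most powerful level-$\alpha$ test for $H_0:\theta\le\theta_0$ versus $H_1:\theta>\theta_0$ among $\mathscr D^n_{\epsilon,\delta}$; (3) $p(\theta_0,Z)=\sum_{x=0}^n F_N(x-Z)\binom nx\theta_0^x(1-\theta_0)^{n-x}$, where $F_N$ is the cdf of $\mathrm{Tulap}(0,b,q)$.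
   Context: A $p$-value for $H_0:\theta\in\Theta_0$ based on data $Z$ is a random variable $p(Z)\in[0,1]$ such that for every $\theta\in\Theta_0$ and every $0<\alpha<1$, $P_\theta(p(Z)\le\alpha)\le\alpha$. Nearest integer function: $[t]$ is the integer nearest to $t$, with $[z+1/2]$ ($z\in\mathbb{Z}$) defined as the nearest even integer. Tulap distribution: for $m\in\mathbb{R}$, $b\in(0,1)$, $q\in[0,1)$, $N_0\sim\mathrm{Tulap}(m,b,0)$ has cdf $F_{N_0}(x)=\frac{b^{-[x-m]}}{1+b}\big(b+(x-m-[x-m]+\tfrac12)(1-b)\big)$ for $x\leq [m]$ and $F_{N_0}(x)=1-\frac{b^{[x-m]}}{1+b}\big(b+([x-m]-(x-m)+\tfrac12)(1-b)\big)$ for $x>[m]$; and $N\sim \mathrm{Tulap}(m,b,q)$ has cdf $F_N(x)=\frac{F_{N_0}(x)-q/2}{1-q}\,I\{q/2\leq F_{N_0}(x)\leq 1-q/2\}+I\{F_{N_0}(x)>1-q/2\}$. A test is a function $\phi:\{0,\dots,n\}\to[0,1]$ (probability of rejecting when $X=x$). $\mathscr D^n_{\epsilon,\delta}$ is the set of tests $\phi$ such that for all $x\in\{0,\dots,n-1\}$: $\phi_x\le e^\epsilon\phi_{x+1}+\delta$, $\phi_{x+1}\le e^\epsilon\phi_x+\delta$, $1-\phi_x\le e^\epsilon(1-\phi_{x+1})+\delta$, $1-\phi_{x+1}\le e^\epsilon(1-\phi_x)+\delta$. A test $\phi^*\in\Phi$ is uniformly most powerful at level $\alpha$ among $\Phi$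 if $\sup_{\theta\in\Theta_0}\mathbb{E}_\theta\phi^*\le\alpha$ and for every $\phi\in\Phi$ with $\sup_{\theta\in\Theta_0}\mathbb{E}_\theta\phi\le\alpha$, $\mathbb{E}_\theta\phi^*\ge\mathbb{E}_\theta\phi$ for all $\theta$ in the alternative. *)

From HB Require Import structures.
From mathcomp Require Import all_boot all_order all_algebra.
From mathcomp Require Import all_classical all_reals all_analysis.
Set Implicit Arguments. Unset Strict Implicit. Unset Printing Implicit Defensive.
Import Order.TTheory GRing.Theory Num.Theory.
Local Open Scope ring_scope.
Local Open Scope classical_set_scope.

Section Defs.
Variable R : realType.

Definition nearest (t : R) : int :=
  let f := Num.floor t in
  let d := t - f%:~R in
  if d < 2^-1 then f
  else if 2^-1 < d then f + 1
  else if ~~ odd (absz f) then f else f + 1.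

(* cdf of Tulap(m, b, 0) *)
Definition tulap0_cdf (m b x : R) : R :=
  let r := nearest (x - m) in
  if x <= (nearest m)%:~R then
    b ^ (- r) / (1 + b) * (b + (x - m - r%:~R + 2^-1) * (1 - b))
  else
    1 - b ^ r / (1 + b) * (b + (r%:~R - (x - m) + 2^-1) * (1 - b)).

Definition tulap_cdf (m b q x : R) : R :=
  let F0 := tulap0_cdf m b x in
  (if (q / 2 <= F0) && (F0 <= 1 - q / 2) then (F0 - q / 2) / (1 - q) else 0)
  + (if 1 - q / 2 < F0 then 1 else 0).

Definition binom_pmf (n : nat) (theta : R) (x : nat) : R :=
  'C(n, x)%:R * theta ^+ x * (1 - theta) ^+ (n - x).

(* a test phi : {0,...,n} -> [0,1] (values outside {0..n} are irrelevant) *)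
Definition is_test (n : nat) (phi : nat -> R) : Prop :=
  forall x, (x <= n)%N -> 0 <= phi x <= 1.

Definition expect (n : nat) (theta : R) (phi : nat -> R) : R :=
  \sum_(x < n.+1) binom_pmf n theta x * phi x.

Definition DP_tests (eps delta : R) (n : nat) (phi : nat -> R) : Prop :=
  is_test n phi /\
  forall x, (x < n)%N ->
    [/\ phi x <= expR eps * phi x.+1 + delta,
        phi x.+1 <= expR eps * phi x + delta,
        1 - phi x <= expR eps * (1 - phi x.+1) + delta &
        1 - phi x.+1 <= expR eps * (1 - phi x) + delta].

Definition h0_set (theta0 theta : R) : Prop := 0 <= theta <= 1 /\ theta <= theta0.
Definition h1_set (theta0 theta : R) : Prop := 0 <= theta <= 1 /\ theta0 < theta.

Definition UMP (n : nat) (theta0 alpha : R) (Phi : (nat -> R) -> Prop)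
    (phis : nat -> R) : Prop :=
  Phi phis /\
  (forall theta, h0_set theta0 theta -> expect n theta phis <= alpha) /\
  (forall phi, Phi phi ->
     (forall theta, h0_set theta0 theta -> expect n theta phi <= alpha) ->
     forall theta, h1_set theta0 theta -> expect n theta phi <= expect n theta phis).

End Defs.

(* Write F for the cdf of Tulap(0, b, q).  Between F y and F (y + 1) the four
   (eps, delta) constraints hold, and the choice of q makes one of them tight as soon
   as F y > 0.  Hence a test in D^n_{eps,delta} that falls below
   phi*_x = F (x - c) at some x stays below it at every larger x: phi - phi* changes
   sign at most once, from + to -.  As the binomial likelihood ratio is monotone in x,
   Karlin's sign-change argument turns the size constraint at theta0 into the power
   comparison at every theta > theta0; with phi* nondecreasing, the same argument
   bounds the size of phi* for theta <= theta0.  Finally the p-value is the size of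
   phi* with cutoff c, continuous and nonincreasing in c, so {p <= alpha} = [c, +oo)
   with p(c) = alpha. *)

From HB Require Import structures.
From mathcomp Require Import all_boot all_order all_algebra.
From mathcomp Require Import all_classical all_reals all_analysis.
From mathcomp Require Import ring lra zify.
Set Implicit Arguments. Unset Strict Implicit. Unset Printing Implicit Defensive.
Import Order.TTheory GRing.Theory Num.Theory.
Local Open Scope ring_scope.
Local Open Scope classical_set_scope.

Section Nearest.
Variable R : realType.

Lemma nearest_bounds (y : R) :
  (nearest y)%:~R - 2^-1 <= y <= (nearest y)%:~R + 2^-1.
Proof.
rewrite /nearest; set f := Num.floor y.
have := floor_itv y; rewrite -/f intrD1 => /andP [fy yf].
case: ifP => [d_lt|/negbT]; first by apply/andP; split; lra.
rewrite -leNgt => d_ge.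
case: ifP => [d_gt|/negbT]; first by rewrite intrD1; apply/andP; split; lra.
rewrite -leNgt => d_le.
by case: ifP => _; last rewrite intrD1; apply/andP; split; lra.
Qed.

Lemma nearest_natr (k : nat) : nearest (k%:R : R) = k.
Proof.
rewrite /nearest.
have -> : Num.floor (k%:R : R) = k%:Z.
  by apply/floor_def; rewrite intrD1 pmulrn; apply/andP; split; lra.
by rewrite pmulrn subrr ifT //; lra.
Qed.

Lemma nearest0 : nearest (0 : R) = 0.
Proof. by have := nearest_natr 0; rewrite mulr0n. Qed.

End Nearest.

Lemma int_le0_of_le_half (R : realType) (r : int) : (r%:~R : R) <= 2^-1 -> r <= 0.
Proof.
move=> h; rewrite leNgt; apply/negP => r_gt0.
have : 1 <= r by lia.
by rewrite -(ler_int R) => ?; lra.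
Qed.

Lemma int_ge0_of_ge_Nhalf (R : realType) (r : int) : - 2^-1 <= (r%:~R : R) -> 0 <= r.
Proof.
move=> h; rewrite leNgt; apply/negP => r_lt0.
have : r <= -1 by lia.
by rewrite -(ler_int R) mulrN1z => ?; lra.
Qed.

Lemma nondecreasing_from_local (R : realType) (f : R -> R) (h : R) : 0 < h ->
  (forall x t, 0 <= t <= h -> f x <= f (x + t)) -> {homo f : x y / x <= y}.
Proof.
move=> h_gt0 f_loc x y xy; set k := Num.truncn ((y - x) / h).
have k_gt : (y - x) / h < k.+1%:R by exact: truncnS_gt.
have k1_gt0 : 0 < k.+1%:R :> R by [].
set s := (y - x) / k.+1%:R.
have s_ge0 : 0 <= s by apply: divr_ge0; lra.
have s_le : s <= h by rewrite ler_pdivrMr // mulrC -ler_pdivrMr //; exact: ltW.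
have y_eq : y = x + k.+1%:R * s by rewrite /s mulrC divfK ?gt_eqF //; ring.
have steps i : f x <= f (x + i%:R * s).
  elim: i => [|i ih]; first by rewrite mul0r addr0.
  apply: le_trans ih _; rewrite -natr1 mulrDl mul1r addrA; apply: f_loc; lra.
by rewrite y_eq; exact: steps.
Qed.

Section TulapZero.
Variables (R : realType) (b : R).
Hypotheses (b_gt0 : 0 < b) (b_lt1 : b < 1).

Local Notation F0 := (tulap0_cdf 0 b).

(* lra and nra ignore section hypotheses, so they are copied into the goal context. *)
Local Ltac b_bounds := move: (b_gt0) (b_lt1) => ? ?.

Definition tulap_lo (r : int) (y : R) :=
  b ^ (- r) / (1 + b) * (b + (y - r%:~R + 2^-1) * (1 - b)).
Definition tulap_hi (r : int) (y : R) :=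
  1 - b ^ r / (1 + b) * (b + (r%:~R - y + 2^-1) * (1 - b)).
Definition tulap_branch (r : int) (y : R) :=
  if y <= 0 then tulap_lo r y else tulap_hi r y.

Let b_neq0 : b != 0. Proof. by rewrite gt_eqF. Qed.
Let b1_neq0 : 1 + b != 0. Proof. by rewrite gt_eqF // addr_gt0. Qed.

Lemma exprz_b_le1 (k : int) : 0 <= k -> 0 < b ^ k <= 1.
Proof.
move=> k_ge0; rewrite exprz_gt0 //=.
by rewrite -[X in _ <= X](expr0z b); apply: ler_wpiXz2l; rewrite ?inE //=; b_bounds; lra.
Qed.

Lemma exprz_b_leb (k : int) : 1 <= k -> b ^ k <= b.
Proof.
move=> k_ge1; rewrite -[X in _ <= X](expr1z b).
by apply: ler_wpiXz2l; rewrite ?inE //=; b_bounds; [lra | lra | exact: le_trans k_ge1].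
Qed.

Lemma tulap_lo_hi0 y : tulap_lo 0 y = tulap_hi 0 y.
Proof. by rewrite /tulap_lo /tulap_hi oppr0 !expr0z; field. Qed.

Lemma tulap_branch_tie r y : y = r%:~R + 2^-1 -> tulap_branch r y = tulap_branch (r + 1) y.
Proof.
move=> ->; rewrite /tulap_branch /tulap_lo /tulap_hi intrD1.
case: ifP => _; last by rewrite expfzDr // expr1z; field.
by rewrite opprD expfzDr // exprN1; field; apply/andP.
Qed.

Lemma tulap_branch_eq r s y :
  r%:~R - 2^-1 <= y <= r%:~R + 2^-1 -> s%:~R - 2^-1 <= y <= s%:~R + 2^-1 ->
  tulap_branch r y = tulap_branch s y.
Proof.
wlog rs : r s / r <= s => [wlog_rs|/andP [ry yr] /andP [sy ys]].
  move=> hr hs; case: (lerP r s) => [rs|/ltW sr]; first exact: wlog_rs.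
  by apply/esym/wlog_rs.
have s_le : s <= r + 1 by rewrite -(ler_int R) intrD1; lra.
have [->//|sr1] : s = r \/ s = r + 1 by lia.
by rewrite sr1; apply: tulap_branch_tie; move: sy; rewrite sr1 intrD1 => ?; lra.
Qed.

Lemma tulap0_cdf_branch r y :
  r%:~R - 2^-1 <= y <= r%:~R + 2^-1 -> F0 y = tulap_branch r y.
Proof.
move=> ry; rewrite /tulap0_cdf nearest0 !subr0 -/(tulap_branch _ y).
exact: tulap_branch_eq (nearest_bounds y) ry.
Qed.

Lemma tulap_lo_succ r y : tulap_lo (r + 1) (y + 1) = tulap_lo r y / b.
Proof. by rewrite /tulap_lo opprD expfzDr // exprN1 intrD1; field; apply/andP. Qed.

Lemma tulap_hi_succ r y : 1 - tulap_hi (r + 1) (y + 1) = b * (1 - tulap_hi r y).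
Proof. by rewrite /tulap_hi expfzDr // expr1z intrD1; field. Qed.

Lemma tulap_loE r y :
  tulap_lo r y * (1 + b) = b ^ (- r) * (b + (y - r%:~R + 2^-1) * (1 - b)).
Proof. by rewrite /tulap_lo; field. Qed.

Lemma tulap_hiE r y :
  (1 - tulap_hi r y) * (1 + b) = b ^ r * (b + (r%:~R - y + 2^-1) * (1 - b)).
Proof. by rewrite /tulap_hi; field. Qed.

Lemma tulap_loB r y y' :
  tulap_lo r y - tulap_lo r y' = b ^ (- r) * (1 - b) / (1 + b) * (y - y').
Proof. by rewrite /tulap_lo; field. Qed.

Lemma tulap_hiB r y y' :
  tulap_hi r y - tulap_hi r y' = b ^ r * (1 - b) / (1 + b) * (y - y').
Proof. by rewrite /tulap_hi; field. Qed.

Lemma tulap0_cdf_succ_left y : y <= - 2^-1 -> F0 (y + 1) = F0 y / b.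
Proof.
b_bounds => y_le; have [y1_le0|y1_gt0] := lerP (y + 1) 0.
  have /andP [ry yr] := nearest_bounds y; set r := nearest y in ry yr *.
  rewrite (tulap0_cdf_branch (r := r) (y := y)) ?ry ?yr //.
  rewrite (tulap0_cdf_branch (r := r + 1) (y := y + 1)).
    by rewrite /tulap_branch y1_le0 ifT ?tulap_lo_succ //; lra.
  by rewrite intrD1; apply/andP; split; lra.
rewrite (tulap0_cdf_branch (r := -1) (y := y)); last by rewrite mulrN1z; apply/andP; split; lra.
rewrite (tulap0_cdf_branch (r := 0) (y := y + 1)); last by apply/andP; split; lra.
rewrite /tulap_branch ifN -?ltNge // ifT; last by lra.
by rewrite -tulap_lo_hi0 -tulap_lo_succ.
Qed.

Lemma tulap0_cdf_succ_right y : - 2^-1 <= y -> 1 - F0 (y + 1) = b * (1 - F0 y).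
Proof.
b_bounds => y_ge; have [y_le0|y_gt0] := lerP y 0.
  rewrite (tulap0_cdf_branch (r := 0) (y := y)); last by apply/andP; split; lra.
  rewrite (tulap0_cdf_branch (r := 1) (y := y + 1)); last by apply/andP; split; lra.
  rewrite /tulap_branch y_le0 ifN -?ltNge; last by lra.
  by rewrite tulap_lo_hi0 -tulap_hi_succ.
have /andP [ry yr] := nearest_bounds y; set r := nearest y in ry yr *.
rewrite (tulap0_cdf_branch (r := r) (y := y)) ?ry ?yr //.
rewrite (tulap0_cdf_branch (r := r + 1) (y := y + 1)); last first.
  by rewrite intrD1; apply/andP; split; lra.
rewrite /tulap_branch ifN -?ltNge; last by lra.
by rewrite ifN -?ltNge ?tulap_hi_succ //; lra.
Qed.

Lemma tulap0_cdf_left_le y : y <= - 2^-1 -> F0 y * (1 + b) <= b.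
Proof.
b_bounds => y_le; have /andP [ry yr] := nearest_bounds y; set r := nearest y in ry yr *.
have r_le0 : r <= 0 by apply: int_le0_of_le_half; lra.
rewrite (tulap0_cdf_branch (r := r) (y := y)) ?ry ?yr // /tulap_branch ifT; last by lra.
rewrite tulap_loE; have [r0|r_neq0] := eqVneq r 0.
  move: ry; rewrite r0 oppr0 expr0z mul1r mulr0z => ry.
  have -> : y = - 2^-1 by lra.
  lra.
have bB : b ^ (- r) <= b by apply: exprz_b_leb; lia.
have bB0 : 0 < b ^ (- r) by apply: exprz_gt0.
have : r <= -1 by lia.
rewrite -(ler_int R) mulrN1z => r_le.
have : b + (y - r%:~R + 2^-1) * (1 - b) <= 1 by nra.
have : 0 <= b + (y - r%:~R + 2^-1) * (1 - b) by nra.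
nra.
Qed.

Lemma tulap0_cdf_right_ge y : - 2^-1 <= y -> b <= F0 y * (1 + b).
Proof.
b_bounds => y_ge; have [y_le0|y_gt0] := lerP y 0.
  rewrite (tulap0_cdf_branch (r := 0) (y := y)); last by apply/andP; split; lra.
  by rewrite /tulap_branch y_le0 tulap_loE oppr0 expr0z mul1r /=; nra.
have /andP [ry yr] := nearest_bounds y; set r := nearest y in ry yr *.
have r_ge0 : 0 <= r by apply: int_ge0_of_ge_Nhalf; lra.
rewrite (tulap0_cdf_branch (r := r) (y := y)) ?ry ?yr // /tulap_branch ifN -?ltNge //.
have := tulap_hiE r y; have /andP [bB0 bB1] := exprz_b_le1 r_ge0 => hiE.
have X_le1 : b + (r%:~R - y + 2^-1) * (1 - b) <= 1 by nra.
have X_ge0 : 0 <= b + (r%:~R - y + 2^-1) * (1 - b) by nra.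
have : b ^ r * (b + (r%:~R - y + 2^-1) * (1 - b)) <= 1 by nra.
nra.
Qed.

Let weight_itv t : 0 <= t <= 1 -> 0 <= b + t * (1 - b) <= 1.
Proof. by b_bounds => /andP [? ?]; apply/andP; split; nra. Qed.

Let scaled_itv B X : 0 <= B <= 1 -> 0 <= X <= 1 -> 0 <= B / (1 + b) * X <= 1.
Proof.
b_bounds => /andP [? ?] /andP [? ?]; have b1_gt0 : 0 < 1 + b by lra.
have /andP [? ?] : 0 < (1 + b)^-1 <= 1 by rewrite invr_gt0 b1_gt0 invf_le1 //=; lra.
have : 0 <= B / (1 + b) <= 1 by apply/andP; split; nra.
by move=> /andP [? ?]; apply/andP; split; nra.
Qed.

Lemma tulap0_cdf_itv y : 0 <= F0 y <= 1.
Proof.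
b_bounds; have /andP [ry yr] := nearest_bounds y; set r := nearest y in ry yr *.
rewrite (tulap0_cdf_branch (r := r) (y := y)) ?ry ?yr // /tulap_branch.
case: ifP => [y_le0|/negbT]; last rewrite -ltNge => y_gt0.
  have /andP [? ?] : 0 < b ^ (- r) <= 1.
    by apply: exprz_b_le1; rewrite oppr_ge0; apply: int_le0_of_le_half; lra.
  by apply: scaled_itv; [apply/andP; split; lra | apply: weight_itv; apply/andP; split; lra].
have /andP [? ?] : 0 < b ^ r <= 1.
  by apply: exprz_b_le1; apply: int_ge0_of_ge_Nhalf; lra.
have /andP [? ?] : 0 <= b ^ r / (1 + b) * (b + (r%:~R - y + 2^-1) * (1 - b)) <= 1.
  by apply: scaled_itv; [apply/andP; split; lra | apply: weight_itv; apply/andP; split; lra].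
by rewrite /tulap_hi; apply/andP; split; lra.
Qed.

Lemma tulap0_cdf0 : F0 0 = 2^-1.
Proof.
b_bounds; rewrite (tulap0_cdf_branch (r := 0)); last by apply/andP; split; lra.
by rewrite /tulap_branch lexx /tulap_lo oppr0 expr0z mul1r; field.
Qed.

Lemma tulap0_cdfN y : F0 (- y) = 1 - F0 y.
Proof.
have [y_lt0|y_gt0|->] := ltgtP y 0; last by rewrite oppr0 tulap0_cdf0; lra.
all: have /andP [ry yr] := nearest_bounds y; set r := nearest y in ry yr *.
all: rewrite (tulap0_cdf_branch (r := r) (y := y)) ?ry ?yr //.
all: rewrite (tulap0_cdf_branch (r := - r) (y := - y));
  last by rewrite intrN; apply/andP; split; lra.
  rewrite /tulap_branch ifN -?ltNge; last by lra.
  rewrite ifT; last by lra.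
  by rewrite /tulap_hi /tulap_lo intrN opprK; congr (_ - _ * (_ + _ * _)); lra.
rewrite /tulap_branch ifT; last by lra.
rewrite ifN -?ltNge; last by lra.
rewrite /tulap_hi /tulap_lo intrN !opprK (_ : forall X : R, 1 - (1 - X) = X); last by move=> X; lra.
by congr (_ * (_ + _ * _)); lra.
Qed.

Let slope_itv B : 0 <= B <= 1 -> 0 <= B * (1 - b) / (1 + b) <= 1.
Proof.
b_bounds => /andP [B_ge0 B_le1]; have b1_gt0 : 0 < 1 + b by lra.
rewrite -mulrA; apply/andP; split.
  by apply: mulr_ge0 => //; apply: divr_ge0; lra.
have : (1 - b) / (1 + b) <= 1 by rewrite ler_pdivrMr //; lra.
have : 0 <= (1 - b) / (1 + b) by apply: divr_ge0; lra.
nra.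
Qed.

Lemma tulap0_cdf_lipschitz_branch r y y' :
  r%:~R - 2^-1 <= y' -> y <= r%:~R + 2^-1 -> y' <= y ->
  0 <= F0 y - F0 y' <= y - y'.
Proof.
b_bounds => ry' yr y'y.
rewrite (tulap0_cdf_branch (r := r) (y := y)); last by apply/andP; split; lra.
rewrite (tulap0_cdf_branch (r := r) (y := y')); last by apply/andP; split; lra.
rewrite /tulap_branch.
have [y_le0|y_gt0] := lerP y 0.
  rewrite [X in _ - X]ifT; last by lra.
  have r_le0 : r <= 0 by apply: int_le0_of_le_half; lra.
  have /andP [bB0 bB1] : 0 < b ^ (- r) <= 1 by apply: exprz_b_le1; lia.
  have bB : 0 <= b ^ (- r) <= 1 by rewrite bB1 ltW.
  by rewrite tulap_loB; have /andP [? ?] := slope_itv bB; apply/andP; split; nra.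
have [y'_le0|y'_gt0] := lerP y' 0.
  have r_le0 : r <= 0 by apply: int_le0_of_le_half; lra.
  have r_ge0 : 0 <= r by apply: int_ge0_of_ge_Nhalf; lra.
  have -> : r = 0 by lia.
  rewrite -tulap_lo_hi0 tulap_loB.
  have bB : 0 <= b ^ (- 0) <= 1 by rewrite oppr0 expr0z; lra.
  by have /andP [? ?] := slope_itv bB; apply/andP; split; nra.
have r_ge0 : 0 <= r by apply: int_ge0_of_ge_Nhalf; lra.
have /andP [bB0 bB1] := exprz_b_le1 r_ge0.
have bB : 0 <= b ^ r <= 1 by rewrite bB1 ltW.
by rewrite tulap_hiB; have /andP [? ?] := slope_itv bB; apply/andP; split; nra.
Qed.

Lemma tulap0_cdf_lipschitz y y' : y' <= y -> y <= y' + 2^-1 -> 0 <= F0 y - F0 y' <= y - y'.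
Proof.
move=> y'y yy'; have /andP [ry' y'r] := nearest_bounds y'; set r := nearest y' in ry' y'r *.
have [yr|ry] := lerP y (r%:~R + 2^-1); first exact: tulap0_cdf_lipschitz_branch yr y'y.
set m : R := r%:~R + 2^-1.
have /andP [? ?] := tulap0_cdf_lipschitz_branch ry' (lexx m) y'r.
have /andP [? ?] : 0 <= F0 y - F0 m <= y - m.
  by apply: (tulap0_cdf_lipschitz_branch (r := r + 1)); rewrite ?intrD1 /m; lra.
by apply/andP; split; lra.
Qed.

Lemma tulap0_cdf_tail e : 0 < e -> exists y, F0 y <= e.
Proof.
b_bounds => e_gt0; have b_norm : `|b| < 1 by rewrite gtr0_norm.
have [k _ /(_ k (leqnn k)) bk_lt] := @cvgr_lt _ _ _ _ _ _ (cvg_expr b_norm) _ e_gt0.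
exists (- k%:R); rewrite (tulap0_cdf_branch (r := - k%:Z)); last first.
  by rewrite intrN; apply/andP; split; lra.
rewrite /tulap_branch ifT; last by rewrite oppr_le0.
rewrite /tulap_lo opprK intrN subrr add0r -exprnP.
have bk_ge0 : 0 <= b ^+ k by rewrite exprn_ge0 // ltW.
have -> : b ^+ k / (1 + b) * (b + 2^-1 * (1 - b)) = b ^+ k / 2 by field; lra.
lra.
Qed.

End TulapZero.

Section Trim.
Variables (R : realType) (q : R).
Hypotheses (q_ge0 : 0 <= q) (q_lt1 : q < 1).

Definition trim (u : R) : R :=
  (if (q / 2 <= u) && (u <= 1 - q / 2) then (u - q / 2) / (1 - q) else 0)
  + (if 1 - q / 2 < u then 1 else 0).

Local Ltac q_bounds := move: (q_ge0) (q_lt1) => ? ?.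

Lemma trim_cases u :
  [\/ u < q / 2 /\ trim u = 0,
      [/\ q / 2 <= u, u <= 1 - q / 2 & trim u * (1 - q) = u - q / 2] |
      1 - q / 2 < u /\ trim u = 1].
Proof.
q_bounds; rewrite /trim.
have q1_neq0 : 1 - q != 0 by rewrite gt_eqF //; lra.
have [uq|qu] := lerP (q / 2) u; have [uq'|qu'] := lerP u (1 - q / 2) => /=.
- by apply: Or32; split => //; rewrite addr0 mulrVK // unitfE.
- by apply: Or33; split => //; rewrite add0r.
- by apply: Or31; split => //; rewrite addr0.
- lra.
Qed.

Lemma trim_itv u : 0 <= trim u <= 1.
Proof.
q_bounds; case: (trim_cases u) => [[_ ->]|[? ? e]|[_ ->]]; try lra.
by apply/andP; split; nra.
Qed.

Lemma trimC u : trim (1 - u) = 1 - trim u.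
Proof.
q_bounds; case: (trim_cases u) => [[? e]|[? ? e]|[? e]];
  case: (trim_cases (1 - u)) => [[? e']|[? ? e']|[? e']]; rewrite ?e ?e'; try lra.
have : 0 < 1 - q by lra.
nra.
Qed.

Lemma trim_lipschitz u u' : u' <= u -> 0 <= trim u - trim u' <= (u - u') / (1 - q).
Proof.
q_bounds => u'u; have q1_gt0 : 0 < 1 - q by lra.
have : 0 < (1 - q)^-1 by rewrite invr_gt0.
have : (1 - q) * (1 - q)^-1 = 1 by rewrite divff // gt_eqF.
rewrite mulrC; case: (trim_cases u) => [[? e]|[? ? e]|[? e]];
  case: (trim_cases u') => [[? e']|[? ? e']|[? e']]; rewrite ?e ?e';
  move=> ? ?; apply/andP; split; nra.
Qed.

Lemma trim_le u : 0 <= u -> trim u * (1 - q) <= u.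
Proof. by q_bounds => ?; case: (trim_cases u) => [[? ->]|[? ? ->]|[? ->]]; nra. Qed.

End Trim.

Definition tulap_step (R : realType) (b u v : R) : Prop :=
  0 <= u <= 1 /\
  ((v * b = u /\ u * (1 + b) <= b) \/ (1 - v = b * (1 - u) /\ b <= u * (1 + b))).

Section TrimStep.
Variables (R : realType) (b d q : R).
Hypotheses (b_gt0 : 0 < b) (b_lt1 : b < 1) (d_ge0 : 0 <= d).
Hypotheses (q_ge0 : 0 <= q) (q_lt1 : q < 1).
(* This is how q = 2db / (1 - b + 2db) enters: trimming q/2 from each tail makes
   the (eps, delta) constraints between consecutive values tight. *)
Hypothesis q_balance : q * (1 - b) = 2 * d * b * (1 - q).

Local Ltac bounds :=
  move: (b_gt0) (b_lt1) (d_ge0) (q_ge0) (q_lt1) (q_balance) => ? ? ? ? ? ?.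

Lemma trim_step_le u v : tulap_step b u v -> trim q u <= trim q v.
Proof.
bounds => [[/andP [u_ge0 u_le1] [[e _]|[e _]]]].
all: have : u <= v by nra.
all: by move=> /(trim_lipschitz q_ge0 q_lt1) /andP [? ?]; lra.
Qed.

Lemma trim_step_dp_lo u v : tulap_step b u v -> b * trim q v <= trim q u + b * d.
Proof.
bounds => [[/andP [u_ge0 u_le1] uv]]; have q1_gt0 : 0 < 1 - q by lra.
have /andP [? ?] := trim_itv q_ge0 q_lt1 u; have /andP [? ?] := trim_itv q_ge0 q_lt1 v.
case: (trim_cases q_ge0 q_lt1 u) => [[? e]|[? ? e]|[? e]];
  case: (trim_cases q_ge0 q_lt1 v) => [[? e']|[? ? e']|[? e']]; rewrite ?e ?e';
  case: uv => [[? ?]|[? ?]]; nra.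
Qed.

Lemma trim_step_dp_hi u v : tulap_step b u v -> b * (1 - trim q u) <= 1 - trim q v + b * d.
Proof.
bounds => [[/andP [u_ge0 u_le1] uv]]; have q1_gt0 : 0 < 1 - q by lra.
have /andP [? ?] := trim_itv q_ge0 q_lt1 u; have /andP [? ?] := trim_itv q_ge0 q_lt1 v.
case: (trim_cases q_ge0 q_lt1 u) => [[? e]|[? ? e]|[? e]];
  case: (trim_cases q_ge0 q_lt1 v) => [[? e']|[? ? e']|[? e']]; rewrite ?e ?e';
  case: uv => [[? ?]|[? ?]]; try nra.
all: have : (b * (1 - trim q u) - (1 - trim q v + b * d)) * (1 - q) <= 0 by nra.
all: nra.
Qed.

Lemma trim_step_dp_tight u v : tulap_step b u v -> 0 < trim q u ->
  [\/ trim q u + b * d <= b * trim q v, 1 - b * (1 - trim q u) + b * d <= trim q v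
    | 1 <= trim q v].
Proof.
bounds => [[/andP [u_ge0 u_le1] uv]] tu_gt0; have q1_gt0 : 0 < 1 - q by lra.
have /andP [? ?] := trim_itv q_ge0 q_lt1 u; have /andP [? ?] := trim_itv q_ge0 q_lt1 v.
case: (trim_cases q_ge0 q_lt1 u) => [[? e]|[? ? e]|[? e]];
  case: (trim_cases q_ge0 q_lt1 v) => [[? e']|[? ? e']|[? e']]; rewrite ?e ?e' in tu_gt0 *;
  case: uv => [[? ?]|[? ?]]; try lra.
all: try (apply: Or33; lra).
all: try (apply: Or31; nra).
all: try (apply: Or32; nra).
Qed.

End TrimStep.

Lemma tulap_cdf_trim (R : realType) (m b q x : R) :
  tulap_cdf m b q x = trim q (tulap0_cdf m b x).
Proof. by []. Qed.

Lemma tulap_cdf_shift (R : realType) (b q : R) (x : nat) t :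
  tulap_cdf x%:R b q t = tulap_cdf 0 b q (t - x%:R).
Proof.
by rewrite /tulap_cdf /tulap0_cdf nearest_natr nearest0 subr0 pmulrn subr_le0.
Qed.

Section TulapCdf.
Variables (R : realType) (b d : R).
Hypotheses (b_gt0 : 0 < b) (b_lt1 : b < 1) (d_ge0 : 0 <= d).

Local Notation q := (2 * d * b / (1 - b + 2 * d * b)).
Local Notation F0 := (tulap0_cdf 0 b).
Local Notation F := (tulap_cdf 0 b q).

Local Ltac bounds := move: (b_gt0) (b_lt1) (d_ge0) => ? ? ?.

Let denom_gt0 : 0 < 1 - b + 2 * d * b.
Proof.
bounds; have : 0 <= d * b by apply: mulr_ge0; lra.
lra.
Qed.

Let q_ge0 : 0 <= q.
Proof. by bounds; apply: divr_ge0; [apply: mulr_ge0; lra | exact: ltW]. Qed.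

Let q_lt1 : q < 1.
Proof. by bounds; rewrite ltr_pdivrMr //; lra. Qed.

Let q_balance : q * (1 - b) = 2 * d * b * (1 - q).
Proof. by field; rewrite gt_eqF. Qed.

Lemma tulap0_cdf_step y : tulap_step b (F0 y) (F0 (y + 1)).
Proof.
split; first exact: tulap0_cdf_itv.
have [y_le|y_gt] := lerP y (- 2^-1).
  left; split; last exact: tulap0_cdf_left_le.
  by rewrite tulap0_cdf_succ_left // mulfVK // gt_eqF.
right; split; first exact: tulap0_cdf_succ_right (ltW y_gt).
exact: tulap0_cdf_right_ge (ltW y_gt).
Qed.

Lemma tulap_cdf_itv y : 0 <= F y <= 1.
Proof. exact: trim_itv. Qed.

Lemma tulap_cdfN y : F (- y) = 1 - F y.
Proof. by rewrite !tulap_cdf_trim tulap0_cdfN // trimC. Qed.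

Lemma tulap_cdf_nondecreasing : {homo F : x y / x <= y}.
Proof.
apply: (nondecreasing_from_local (h := 2^-1)) => [|y t /andP [t_ge0 t_le]]; first lra.
rewrite !tulap_cdf_trim.
have /andP [? _] : 0 <= F0 (y + t) - F0 y <= y + t - y.
  by apply: tulap0_cdf_lipschitz => //; lra.
have /andP [? _] := trim_lipschitz q_ge0 q_lt1 (u := F0 (y + t)) (u' := F0 y) ltac:(lra).
lra.
Qed.

Lemma tulap_cdf_continuous e : 0 < e -> exists2 h, 0 < h & forall y, F (y + h) <= F y + e.
Proof.
bounds => e_gt0; have q1_gt0 : 0 < 1 - q by have := q_lt1; lra.
have h_gt0 : 0 < Num.min 2^-1 (e * (1 - q)).
  by rewrite lt_min mulr_gt0 // andbT; lra.
exists (Num.min 2^-1 (e * (1 - q))) => // y.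
set h := Num.min _ _ in h_gt0 *; have h_le : h <= 2^-1 by rewrite ge_min lexx.
have h_le' : h <= e * (1 - q) by rewrite ge_min lexx orbT.
have /andP [? F0_le] : 0 <= F0 (y + h) - F0 y <= y + h - y.
  by apply: tulap0_cdf_lipschitz => //; lra.
have /andP [_ F_le] := trim_lipschitz q_ge0 q_lt1 (u := F0 (y + h)) (u' := F0 y) ltac:(lra).
suff : (F0 (y + h) - F0 y) / (1 - q) <= e by rewrite !tulap_cdf_trim; lra.
by rewrite ler_pdivrMr //; lra.
Qed.

Let ler_invb x y z : (x <= b^-1 * y + z) = (b * x <= y + b * z).
Proof. by rewrite -(ler_pM2l b_gt0) mulrDr mulrA mulfV ?gt_eqF // mul1r. Qed.

Lemma tulap_cdf_dp y :
  [/\ F y <= b^-1 * F (y + 1) + d, F (y + 1) <= b^-1 * F y + d,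
      1 - F y <= b^-1 * (1 - F (y + 1)) + d & 1 - F (y + 1) <= b^-1 * (1 - F y) + d].
Proof.
bounds; rewrite !ler_invb !tulap_cdf_trim.
have step := tulap0_cdf_step y.
have := trim_step_le b_gt0 b_lt1 d_ge0 q_ge0 q_lt1 q_balance step.
have := trim_step_dp_lo b_gt0 b_lt1 d_ge0 q_ge0 q_lt1 q_balance step.
have := trim_step_dp_hi b_gt0 b_lt1 d_ge0 q_ge0 q_lt1 q_balance step.
have /andP [? ?] := trim_itv q_ge0 q_lt1 (F0 y).
have /andP [? ?] := trim_itv q_ge0 q_lt1 (F0 (y + 1)).
by move=> ? ? ?; split; nra.
Qed.

Lemma tulap_cdf_dp_max y p0 p1 : 0 < F y -> p0 <= F y -> p1 <= 1 ->
  p1 <= b^-1 * p0 + d -> 1 - p0 <= b^-1 * (1 - p1) + d -> p1 <= F (y + 1).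
Proof.
bounds; rewrite !ler_invb !tulap_cdf_trim => Fy_gt0 p0_le p1_le1 dp1 dp2.
have step := tulap0_cdf_step y.
by case: (trim_step_dp_tight b_gt0 b_lt1 d_ge0 q_ge0 q_lt1 q_balance step Fy_gt0); nra.
Qed.

Lemma tulap_cdf_tail e : 0 < e -> exists y, F y <= e.
Proof.
bounds => e_gt0; have q1_gt0 : 0 < 1 - q by have := q_lt1; lra.
have [y F0y_le] := tulap0_cdf_tail b_gt0 b_lt1 (mulr_gt0 e_gt0 q1_gt0).
exists y; rewrite tulap_cdf_trim -(ler_pM2r q1_gt0).
have /andP [F0y_ge0 _] := tulap0_cdf_itv b_gt0 b_lt1 y.
by have := trim_le q_ge0 q_lt1 F0y_ge0; lra.
Qed.

End TulapCdf.

Section Binomial.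
Variables (R : realType) (n : nat).

Lemma binom_pmf_ge0 (th : R) x : 0 <= th <= 1 -> 0 <= binom_pmf n th x.
Proof.
move=> /andP [th_ge0 th_le1].
by rewrite /binom_pmf !mulr_ge0 ?exprn_ge0 // subr_ge0.
Qed.

Lemma binom_pmf_gt0 (th : R) x : 0 < th < 1 -> (x <= n)%N -> 0 < binom_pmf n th x.
Proof.
move=> /andP [th_gt0 th_lt1] x_le.
by rewrite /binom_pmf !mulr_gt0 ?exprn_gt0 ?subr_gt0 // ltr0n bin_gt0.
Qed.

Lemma binom_pmf_sum (th : R) : \sum_(x < n.+1) binom_pmf n th x = 1.
Proof.
rewrite -(expr1n R n) -{1}(subrK th 1) exprDn.
by apply: eq_bigr => i _; rewrite /binom_pmf -mulr_natl; ring.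
Qed.

Definition binom_lr (th0 th : R) (x : nat) :=
  (th / th0) ^+ x * ((1 - th) / (1 - th0)) ^+ (n - x).

Lemma binom_pmf_lr (th0 th : R) x : 0 < th0 < 1 ->
  binom_pmf n th x = binom_lr th0 th x * binom_pmf n th0 x.
Proof.
move=> /andP [th0_gt0 th0_lt1]; rewrite /binom_pmf /binom_lr !exprMn !exprVn.
have : th0 ^+ x != 0 by rewrite expf_neq0 // gt_eqF.
have : (1 - th0) ^+ (n - x) != 0 by rewrite expf_neq0 // gt_eqF // subr_gt0.
by move=> ? ?; field; apply/andP.
Qed.

Lemma binom_lr_ge0 (th0 th : R) x : 0 < th0 < 1 -> 0 <= th <= 1 -> 0 <= binom_lr th0 th x.
Proof.
move=> /andP [? ?] /andP [? ?].
by rewrite /binom_lr mulr_ge0 // exprn_ge0 // divr_ge0 //; lra.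
Qed.

Let binom_lrS (th0 th : R) x : (x < n)%N ->
  binom_lr th0 th x.+1 - binom_lr th0 th x =
  (th / th0) ^+ x * ((1 - th) / (1 - th0)) ^+ (n - x.+1) * (th / th0 - (1 - th) / (1 - th0)).
Proof.
move=> x_lt; rewrite /binom_lr.
have -> : (n - x = (n - x.+1).+1)%N by lia.
by rewrite !exprS; ring.
Qed.

Lemma binom_lr_nondecreasing (th0 th : R) x y : 0 < th0 < 1 -> th0 <= th <= 1 ->
  (x <= y <= n)%N -> binom_lr th0 th x <= binom_lr th0 th y.
Proof.
move=> /andP [? ?] /andP [? ?]; elim: y => [/andP [x_le0 _]|y ih /andP [x_le y_lt]].
  by have -> : x = 0%N by lia.
have [->//|x_neq] := eqVneq x y.+1.
apply: le_trans (ih _) _; first by apply/andP; split; lia.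
rewrite -subr_ge0 binom_lrS // mulr_ge0 ?mulr_ge0 ?exprn_ge0 ?divr_ge0 //; try lra.
rewrite subr_ge0 ler_pdivrMr; last by lra.
by rewrite mulrAC ler_pdivlMr //; nra.
Qed.

Lemma binom_lr_nonincreasing (th0 th : R) x y : 0 < th0 < 1 -> 0 <= th <= th0 ->
  (x <= y <= n)%N -> binom_lr th0 th y <= binom_lr th0 th x.
Proof.
move=> /andP [? ?] /andP [? ?]; elim: y => [/andP [x_le0 _]|y ih /andP [x_le y_lt]].
  by have -> : x = 0%N by lia.
have [->//|x_neq] := eqVneq x y.+1.
apply: le_trans _ (ih _); last by apply/andP; split; lia.
rewrite -subr_le0 binom_lrS // mulr_ge0_le0 ?mulr_ge0 ?exprn_ge0 ?divr_ge0 //; try lra.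
rewrite subr_le0 ler_pdivlMr; last by lra.
by rewrite mulrAC ler_pdivrMr //; nra.
Qed.

(* Karlin's sign-change argument: if w changes sign at most once, from + to -,
   then comparing g with its value at the sign change gives w x * (g x - g k) <= 0. *)
Lemma sum_sign_change_le0 (w g : nat -> R) :
  (forall x y, (x <= y <= n)%N -> w x < 0 -> w y <= 0) ->
  (forall x y, (x <= y <= n)%N -> g x <= g y) ->
  (forall x, (x <= n)%N -> 0 <= g x) ->
  \sum_(x < n.+1) w x <= 0 -> \sum_(x < n.+1) w x * g x <= 0.
Proof.
move=> w_sign g_le g_ge0 w_sum.
have [k [k_le wg_le0]] :
    exists k, (k <= n)%N /\ forall x, (x <= n)%N -> w x * (g x - g k) <= 0.
  case: (boolP [exists x : 'I_n.+1, w x < 0]) => [/existsP [x0 wx0]|].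
    have ex_neg : exists m, (m <= n)%N && (w m < 0) by exists x0; rewrite wx0 andbT -ltnS.
    case: (ex_minnP ex_neg) => k /andP [k_le wk_lt0] k_min.
    exists k; split => // x x_le; have [kx|xk] := leqP k x.
      apply: mulr_le0_ge0; first by apply: (w_sign k) => //; exact/andP.
      by rewrite subr_ge0 g_le //; exact/andP.
    have wx_ge0 : 0 <= w x.
      by rewrite leNgt; apply/negP => wx_lt0; have := k_min x; rewrite x_le wx_lt0; lia.
    by rewrite mulr_ge0_le0 // subr_le0 g_le // (ltnW xk).
  rewrite negb_exists => /forallP w_ge0; exists n; split => // x x_le.
  have := w_ge0 (Ordinal (x_le : (x < n.+1)%N)); rewrite /= -leNgt => wx_ge0.
  by rewrite mulr_ge0_le0 // subr_le0 g_le // x_le leqnn.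
have -> : \sum_(x < n.+1) w x * g x =
    \sum_(x < n.+1) w x * (g x - g k) + (\sum_(x < n.+1) w x) * g k.
  by rewrite mulr_suml -big_split /=; apply: eq_bigr => i _; ring.
have : \sum_(x < n.+1) w x * (g x - g k) <= 0.
  by apply: sumr_le0 => i _; apply: wg_le0; rewrite -ltnS.
by have := mulr_le0_ge0 w_sum (g_ge0 k k_le); lra.
Qed.

Lemma expect_binom_le (th th0 : R) (g : nat -> R) : 0 < th0 < 1 -> 0 <= th <= th0 ->
  (forall x y, (x <= y <= n)%N -> g x <= g y) -> (forall x, (x <= n)%N -> 0 <= g x) ->
  expect n th g <= expect n th0 g.
Proof.
move=> th0_itv /andP [th_ge0 th_le] g_le g_ge0.
rewrite /expect -subr_le0 -sumrB.
under eq_bigr do rewrite -mulrBl.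
apply: (sum_sign_change_le0 (w := fun x => binom_pmf n th x - binom_pmf n th0 x)) => //;
  last by rewrite sumrB !binom_pmf_sum subrr.
move=> x y /andP [xy y_le] /=; have x_le := leq_trans xy y_le.
have xy_le : (x <= y <= n)%N by rewrite xy.
have lr_le := binom_lr_nonincreasing th0_itv (introT andP (conj th_ge0 th_le)) xy_le.
rewrite !(binom_pmf_lr th _ th0_itv) => w_lt0.
have := binom_pmf_gt0 th0_itv x_le; have := binom_pmf_gt0 th0_itv y_le => ? ?.
have : binom_lr th0 th x < 1 by nra.
nra.
Qed.

End Binomial.

Section CdfTail.
Variable R : realType.

Lemma measurable_ray_le (t : R) : measurable [set s : R | s <= t].
Proof. by rewrite -set_itvNyc; exact: measurable_itv. Qed.

Lemma measurable_ray_lt (t : R) : measurable [set s : R | s < t].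
Proof. by rewrite -set_itvNyo; exact: measurable_itv. Qed.

Lemma probability_ge_cdf (P : probability R R) (F : R -> R) (a : R) :
  (forall t, P [set s | s <= t] = (F t)%:E) ->
  (forall e, 0 < e -> exists2 h, 0 < h & forall t, F (t + h) <= F t + e) ->
  P [set s | a <= s] = (1 - F a)%:E.
Proof.
move=> P_cdf F_cont.
have -> : [set s : R | a <= s] = ~` [set s | s < a].
  by apply/seteqP; split => x /=; rewrite leNgt => /negP.
rewrite probability_setC; last exact: measurable_ray_lt.
suff -> : P [set s | s < a] = (F a)%:E by [].
have lt_le : (P [set s | (s < a)%R] <= (F a)%:E)%E.
  by rewrite -P_cdf le_measure ?inE //; [exact: measurable_ray_lt | exact: measurable_ray_le |
    move=> x /= /ltW].
have [m Pm] : exists m, P [set s | s < a] = m%:E.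
  exists (fine (P [set s | s < a])); rewrite fineK // ge0_fin_numE ?measure_ge0 //.
  by apply: le_lt_trans lt_le _; exact: ltry.
rewrite Pm lee_fin in lt_le *; congr (_%:E); apply/eqP; rewrite eq_le lt_le /=.
apply/ler_addgt0Pr => e e_gt0; have [h h_gt0 F_le] := F_cont e e_gt0.
have : ((F (a - h))%:E <= m%:E)%E.
  rewrite -P_cdf -Pm le_measure ?inE //; [exact: measurable_ray_le | exact: measurable_ray_lt |].
  by move=> x /= x_le; apply: le_lt_trans x_le _; lra.
by rewrite lee_fin; have := F_le (a - h); rewrite subrK; lra.
Qed.

End CdfTail.

Section Threshold.
Variable R : realType.

Lemma nonincreasing_threshold (f : R -> R) (a : R) :
  {homo f : x y /~ x <= y} ->
  (forall e, 0 < e -> exists2 h, 0 < h & forall z, f z <= f (z + h) + e) ->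
  (exists z, a < f z) -> (exists z, f z <= a) ->
  exists c, (forall z, f z <= a <-> c <= z) /\ f c = a.
Proof.
move=> f_le f_cont [z0 fz0] [z1 fz1].
pose S := [set z | a < f z].
have S_ub : ubound S z1.
  move=> z; rewrite /S /= => az; rewrite leNgt; apply/negP => z1z.
  by have := f_le _ _ (ltW z1z); lra.
have S_sup : has_sup S by split; [exists z0 | exists z1].
set c := sup S.
have below z : z < c -> a < f z.
  move=> zc; have cz_gt0 : 0 < c - z by rewrite subr_gt0.
  have [s Ss cs] := sup_adherent cz_gt0 S_sup; rewrite -/c in cs; move: Ss; rewrite /S /=.
  move=> as_; have /f_le : z <= s by lra.
  lra.
have above z : c < z -> f z <= a.
  move=> cz; rewrite leNgt; apply/negP => afz.
  by have := ub_le_sup (proj2 S_sup) (afz : S z); rewrite -/c; lra.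
have fc_le : f c <= a.
  apply/ler_addgt0Pr => e e_gt0; have [h h_gt0 f_le'] := f_cont e e_gt0.
  by have := f_le' c; have := above (c + h); lra.
have fc_ge : a <= f c.
  apply/ler_addgt0Pr => e e_gt0; have [h h_gt0 f_le'] := f_cont e e_gt0.
  have := f_le' (c - h); rewrite subrK.
  by have := below (c - h); lra.
exists c; split; last by apply/eqP; rewrite eq_le fc_le fc_ge.
move=> z; split => [fz|]; first by rewrite leNgt; apply/negP => /below; lra.
by rewrite le_eqVlt => /orP [/eqP <- // | /above].
Qed.

End Threshold.

Section TulapTest.
Variables (R : realType) (eps delta theta0 : R) (n : nat).
Hypotheses (eps_gt0 : 0 < eps) (delta_ge0 : 0 <= delta) (theta0_itv : 0 < theta0 < 1).

Local Notation b := (expR (- eps)).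
Local Notation q := (2 * delta * b / (1 - b + 2 * delta * b)).
Local Notation F := (tulap_cdf 0 b q).

Let b_gt0 : 0 < b. Proof. exact: expR_gt0. Qed.
Let b_lt1 : b < 1. Proof. by rewrite expR_lt1 oppr_lt0. Qed.
Let expR_epsE : expR eps = b^-1. Proof. by rewrite expRN invrK. Qed.

Let F_itv := tulap_cdf_itv b_gt0 b_lt1 delta_ge0.
Let F_le := tulap_cdf_nondecreasing b_gt0 b_lt1 delta_ge0.
Let F_cont := tulap_cdf_continuous b_gt0 b_lt1 delta_ge0.
Let theta0_01 : 0 <= theta0 <= 1.
Proof. by case/andP: theta0_itv => ? ?; apply/andP; split; lra. Qed.

Let natrS_subr (x : nat) c : x.+1%:R - c = x%:R - c + 1 :> R.
Proof. by rewrite -natr1; ring. Qed.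

(* The closed form (3) of p(theta0, z) = P(X' + N >= z). *)
Definition pvalue (z : R) : R := \sum_(x < n.+1) binom_pmf n theta0 x * F (x%:R - z).

(* phi*_x when the rejection region {z | p(theta0, z) <= alpha} is [c, +oo). *)
Definition tulap_test (c : R) (x : nat) : R := F (x%:R - c).

Lemma tulap_probability_ge (P : probability R R) (m : nat) c :
  (forall t, P [set s | s <= t] = (tulap_cdf m%:R b q t)%:E) ->
  P [set s | c <= s] = (F (m%:R - c))%:E.
Proof.
move=> P_cdf.
have P_cdf' t : P [set s | s <= t] = (F (t - m%:R))%:E by rewrite P_cdf tulap_cdf_shift.
have F_cont' e : 0 < e -> exists2 h, 0 < h & forall t, F (t + h - m%:R) <= F (t - m%:R) + e.
  by move=> /F_cont [h h_gt0 F_jump]; exists h => // t; rewrite [t + h - _]addrAC.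
by rewrite (probability_ge_cdf _ P_cdf' F_cont') -tulap_cdfN // opprB.
Qed.

Lemma pvalue_itv z : 0 <= pvalue z <= 1.
Proof.
rewrite /pvalue; apply/andP; split.
  by apply: sumr_ge0 => i _; rewrite mulr_ge0 ?binom_pmf_ge0 //; case/andP: (F_itv (i%:R - z)).
rewrite -[X in _ <= X](binom_pmf_sum n theta0); apply: ler_sum => i _.
rewrite ler_piMr ?binom_pmf_ge0 //.
by case/andP: (F_itv (i%:R - z)).
Qed.

Lemma pvalue_nonincreasing : {homo pvalue : z z' /~ z <= z'}.
Proof.
move=> z z' zz'; apply: ler_sum => i _; rewrite ler_wpM2l ?binom_pmf_ge0 //.
by apply: F_le; lra.
Qed.

Lemma pvalue_continuous e : 0 < e -> exists2 h, 0 < h & forall z, pvalue z <= pvalue (z + h) + e.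
Proof.
move=> e_gt0; have [h h_gt0 F_jump] := F_cont e_gt0; exists h => // z.
have -> : e = \sum_(x < n.+1) binom_pmf n theta0 x * e by rewrite -mulr_suml binom_pmf_sum mul1r.
rewrite /pvalue -big_split /=.
apply: ler_sum => i _; rewrite -mulrDr ler_wpM2l ?binom_pmf_ge0 //.
by have := F_jump (i%:R - (z + h)); rewrite opprD addrA subrK.
Qed.

Lemma pvalue_threshold alpha : 0 < alpha < 1 ->
  exists c, (forall z, pvalue z <= alpha <-> c <= z) /\ pvalue c = alpha.
Proof.
case/andP=> alpha_gt0 alpha_lt1.
apply: nonincreasing_threshold pvalue_nonincreasing pvalue_continuous _ _.
  have [y Fy_le] : exists y, F y <= (1 - alpha) / 2.
    by apply: (tulap_cdf_tail b_gt0 b_lt1 delta_ge0); lra.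
  exists y; rewrite /pvalue.
  apply: (@lt_le_trans _ _ (\sum_(x < n.+1) binom_pmf n theta0 x * F (- y))).
    by rewrite -mulr_suml binom_pmf_sum mul1r tulap_cdfN //; lra.
  apply: ler_sum => i _; rewrite ler_wpM2l ?binom_pmf_ge0 //.
  by apply: F_le; have := ler0n R i; lra.
have [y Fy_le] := tulap_cdf_tail b_gt0 b_lt1 delta_ge0 alpha_gt0.
exists (n%:R - y); rewrite /pvalue.
apply: (@le_trans _ _ (\sum_(x < n.+1) binom_pmf n theta0 x * F y)).
  apply: ler_sum => i _; rewrite ler_wpM2l ?binom_pmf_ge0 //.
  apply: F_le; have : (i <= n)%N by rewrite -ltnS.
  by rewrite -(ler_nat R); lra.
by rewrite -mulr_suml binom_pmf_sum mul1r.
Qed.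

Lemma pvalue_expect c : pvalue c = expect n theta0 (tulap_test c).
Proof. by []. Qed.

Lemma tulap_test_le c x y : (x <= y)%N -> tulap_test c x <= tulap_test c y.
Proof. by rewrite -(ler_nat R) => xy; apply: F_le; lra. Qed.

Lemma tulap_test_dp c : DP_tests eps delta n (tulap_test c).
Proof.
split => [x _|x _]; first exact: F_itv.
by rewrite /tulap_test expR_epsE natrS_subr; exact: tulap_cdf_dp.
Qed.

Lemma tulap_test_level c theta :
  h0_set theta0 theta -> expect n theta (tulap_test c) <= pvalue c.
Proof.
case=> /andP [theta_ge0 _] theta_le; rewrite pvalue_expect.
apply: expect_binom_le => //; first exact/andP.
  by move=> x y /andP [xy _]; exact: tulap_test_le.
by move=> x _; case/andP: (F_itv (x%:R - c)).
Qed.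

Lemma dp_test_below c (phi : nat -> R) x : DP_tests eps delta n phi ->
  phi x < tulap_test c x -> forall y, (x <= y <= n)%N -> phi y <= tulap_test c y.
Proof.
move=> [phi_test phi_dp] phi_lt y /andP [xy y_le].
suff [] : phi y <= tulap_test c y /\ 0 < tulap_test c y by [].
have base : phi x <= tulap_test c x /\ 0 < tulap_test c x.
  have /andP [phi_ge0 _] := phi_test x (leq_trans xy y_le).
  by split; [exact: ltW | exact: le_lt_trans phi_ge0 phi_lt].
elim: y xy y_le => [|y ih]; first by rewrite leqn0 => /eqP <-.
rewrite leq_eqVlt ltnS => /orP [/eqP <- // | xy] y_lt.
have [phi_le g_gt0] := ih xy (ltnW y_lt).
have [_ dp_up dp_down _] := phi_dp y y_lt.
have /andP [_ phiS_le1] := phi_test y.+1 y_lt.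
rewrite expR_epsE in dp_up dp_down.
rewrite /tulap_test natrS_subr.
split; first exact: tulap_cdf_dp_max g_gt0 phi_le phiS_le1 dp_up dp_down.
by apply: lt_le_trans g_gt0 _; apply: F_le; lra.
Qed.

Lemma tulap_test_most_powerful c (phi : nat -> R) theta : DP_tests eps delta n phi ->
  expect n theta0 phi <= pvalue c -> h1_set theta0 theta ->
  expect n theta phi <= expect n theta (tulap_test c).
Proof.
move=> phi_dp phi_size [/andP [_ theta_le1] theta_gt].
have theta_itv : theta0 <= theta <= 1 by rewrite theta_le1 ltW.
pose w x := binom_pmf n theta0 x * (phi x - tulap_test c x).
rewrite /expect -subr_le0 -sumrB.
have -> : \sum_(i < n.+1) (binom_pmf n theta i * phi i - binom_pmf n theta i * tulap_test c i) =
    \sum_(i < n.+1) w i * binom_lr n theta0 theta i.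
  by apply: eq_bigr => i _; rewrite /w (binom_pmf_lr _ _ _ theta0_itv); ring.
apply: sum_sign_change_le0.
- move=> x y /andP [xy y_le]; have x_le := leq_trans xy y_le.
  have := binom_pmf_gt0 theta0_itv x_le; have := binom_pmf_gt0 theta0_itv y_le.
  move=> pmf_y pmf_x w_lt0; have phi_lt : phi x < tulap_test c x by rewrite /w in w_lt0; nra.
  have := dp_test_below phi_dp phi_lt (_ : (x <= y <= n)%N); rewrite xy y_le /w => /(_ isT).
  by nra.
- by move=> x y; exact: binom_lr_nondecreasing.
- move=> x _; apply: binom_lr_ge0 => //; rewrite theta_le1 andbT.
  by case/andP: theta0_itv => ? _; lra.
- rewrite /w; under eq_bigr do rewrite mulrBr.
  by move: phi_size; rewrite sumrB pvalue_expect /expect; lra.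
Qed.

Lemma tulap_test_UMP alpha c (phis : nat -> R) : pvalue c = alpha ->
  (forall x, (x <= n)%N -> phis x = tulap_test c x) ->
  UMP n theta0 alpha (DP_tests eps delta n) phis.
Proof.
move=> size_c phisE.
have expectE theta : expect n theta phis = expect n theta (tulap_test c).
  by apply: eq_bigr => i _; rewrite phisE // -ltnS.
have [test_itv test_dp] := tulap_test_dp c.
split; [split|split].
- by move=> x x_le; rewrite phisE //; exact: test_itv.
- by move=> x x_lt; rewrite !phisE ?(ltnW x_lt) //; exact: test_dp.
- by move=> theta h0; rewrite expectE -size_c; exact: tulap_test_level.
move=> phi phi_dp phi_level theta h1; rewrite expectE.
apply: tulap_test_most_powerful h1 => //; rewrite size_c.
by apply: phi_level; split; [exact: theta0_01 | exact: lexx].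
Qed.

End TulapTest.

Theorem theorem5 (R : realType) (eps delta theta0 : R) (n : nat)
    (TZ : nat -> probability R R) (TN : probability R R) :
  0 < eps -> 0 <= delta -> (0 < n)%N -> 0 < theta0 < 1 ->
  let b := expR (- eps) in
  let q := 2 * delta * b / (1 - b + 2 * delta * b) in
  (* Z | X = x  ~  Tulap(x, b, q) *)
  (forall x : nat, (x <= n)%N -> forall t : R,
      TZ x [set s | s <= t] = (tulap_cdf x%:R b q t)%:E) ->
  (* N ~ Tulap(0, b, q) *)
  (forall t : R, TN [set s | s <= t] = (tulap_cdf 0 b q t)%:E) ->
  (* P_theta(Z \in A) *)
  let PZ (theta : R) (A : set R) : R :=
    \sum_(x < n.+1) binom_pmf n theta x * fine (TZ x A) in
  (* p(theta0, z) = P(X' + N >= z), X' ~ Binom(n, theta0), N ~ Tulap(0,b,q) indep. *)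
  let pval (z : R) : R :=
    \sum_(x < n.+1) binom_pmf n theta0 x * fine (TN [set t | z - x%:R <= t]) in
  (* (1) p-value *)
  ((forall z, 0 <= pval z <= 1) /\
   forall theta, h0_set theta0 theta -> forall alpha, 0 < alpha < 1 ->
     PZ theta [set z | pval z <= alpha] <= alpha)
  /\
  (* (2) UMP test among D^n_{eps,delta} *)
  (forall alpha, 0 < alpha < 1 ->
     UMP n theta0 alpha (DP_tests eps delta n)
       (fun x => fine (TZ x [set z | pval z <= alpha])))
  /\
  (* (3) closed form *)
  (forall z, pval z = \sum_(x < n.+1) tulap_cdf 0 b q (x%:R - z) * binom_pmf n theta0 x).
Proof.
move=> eps_gt0 delta_ge0 _ theta0_itv b q TZ_cdf TN_cdf PZ pval.
have pvalE z : pval z = pvalue eps delta theta0 n z.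
  apply: eq_bigr => x _.
  by rewrite (tulap_probability_ge eps_gt0 delta_ge0 (m := 0) _ TN_cdf) mulr0n sub0r opprB.
have TZ_ge c x : (x <= n)%N -> fine (TZ x [set z | c <= z]) = tulap_test eps delta c x.
  by move=> x_le; rewrite (tulap_probability_ge eps_gt0 delta_ge0 _ (TZ_cdf x x_le)).
have region alpha : 0 < alpha < 1 -> exists c,
    [set z | pval z <= alpha] = [set z | c <= z] /\ pvalue eps delta theta0 n c = alpha.
  move=> /(pvalue_threshold n eps_gt0 delta_ge0 theta0_itv) [c [c_iff c_size]].
  by exists c; split => //; apply/seteqP; split => z /=; rewrite pvalE => /c_iff.
split; [split|split].
- by move=> z; rewrite pvalE; exact: pvalue_itv.
- move=> theta h0 alpha /region [c [-> <-]].
  rewrite /PZ (eq_bigr (fun x : 'I_n.+1 => binom_pmf n theta x * tulap_test eps delta c x)).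
    exact: tulap_test_level.
  by move=> i _; rewrite TZ_ge // -ltnS.
- move=> alpha /region [c [-> c_size]].
  exact: tulap_test_UMP c_size (fun x x_le => TZ_ge c x x_le).
- by move=> z; rewrite pvalE; apply: eq_bigr => i _; rewrite mulrC.
Qed.
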